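(* Let $\gamma>0$ and let $\mathcal M\subset\mathbb{R}^3$ be a finite set of models. The following are equivalent: (i) There exists a causal output-feedback control policy $\mu^\star$ such that the closed-loop system (defined in the context) is finite gain. (ii) For each $M=(a,b,c)\in\mathcal M$ the Riccati equation $P_M=\left(\frac{a^2}{P_M+\gamma^2c^2-1}+\gamma^{-2}\right)^{-1}$ has a positive solution $P_M$ (so that the observers $(\hat x_M,l_M)$ below are defined), and there exists an observer-based control policy $\eta^\star$, \[ u(t)=\eta^\star\left\{\left(\hat x_M(t),l_M(t+1),y(t)\right):M\in\mathcal M\right\}, \] such that $l_M(t+1)\le 0$ for all $M\in\mathcal M$, all $y\in\ell_2[0,t]$ and all $t\ge 0$. Moreover, if $\eta^\star$ satisfies (ii), then the policy \[ \mu^\star_t(y(0),\dots,y(t))=\eta^\star\left\{\left(\hat x_M(t),l_M(t+1),y(t)\right):M\in\mathcal M\right\} \] satisfies (i).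
   Context: For a model $M=(a,b,c)\in\mathcal M$ the uncertain system is $x(t+1)=ax(t)+bu(t)+w(t)$, $x(0)=x_0$, $y(t)=cx(t)+v(t)$, $t\ge 0$, with real-valued signals and $w,v\in\ell_2[0,T]$ for all $T$; the model $M$ is unknown but belongs to $\mathcal M$. A causal output-feedback policy generates $u(t)=\mu_t(y(0),\dots,y(t))$. With $P_M$ a positive solution of the Riccati equation above, the closed loop is finite gain if for all $T\ge 0$, all $w,v$, all $x_0\in\mathbb{R}$ and every $M\in\mathcal M$, \[ \sum_{\tau=0}^{T+1}x(\tau)^2-\gamma^2\sum_{\tau=0}^{T}w(\tau)^2-\gamma^2\sum_{\tau=0}^{T+1}v(\tau)^2-P_Mx(0)^2\le 0. \] Observers: with $\hat a_M=\frac{aP_M}{P_M+\gamma^2c^2-1}$ and $\hat g_M=\gamma^2\frac{ac}{P_M+\gamma^2c^2-1}$, define recursively from the measurements $y$ and applied inputs $u$: $\hat x_M(t+1)=\hat a_M\hat x_M(t)+bu(t)+\hat g_My(t)$, $\hat x_M(0)=0$, and $l_M(t+1)=l_M(t)-P_M\hat x_M(t)^2-\gamma^2y(t)^2+\frac{(P_M\hat x_M(t)+\gamma^2cy(t))^2}{P_M+\gamma^2c^2-1}$, $l_M(0)=0$.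
   Formalization: Each positive solution $P_M$ of the Riccati equation also satisfies $P_M+\gamma^2c^2-1>0$, with one such family $P_M$ shared by the finite-gain condition in (i), the observers in (ii) and the final assertion. Each condition added here is assumed in the paper as well or is needed for the statement above to hold. *)

From mathcomp Require Import all_boot all_order all_algebra.
From mathcomp Require Import reals.

Set Implicit Arguments.
Unset Strict Implicit.
Unset Printing Implicit Defensive.

Import Order.TTheory GRing.Theory Num.Theory.
Local Open Scope ring_scope.

Section Defs.
Variable R : realType.

Definition model := (R * R * R)%type.
Definition ma (M : model) : R := M.1.1.
Definition mb (M : model) : R := M.1.2.
Definition mc (M : model) : R := M.2.

Definition rden (gamma : R) (M : model) (p : R) : R :=
  p + gamma ^+ 2 * mc M ^+ 2 - 1.

Definition riccati_sol (gamma : R) (M : model) (p : R) : Prop :=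
  0 < p /\ 0 < rden gamma M p /\
  p = (ma M ^+ 2 / rden gamma M p + gamma ^- 2)^-1.

Definition riccati_sols (gamma : R) (Ms : seq model) (P : model -> R) : Prop :=
  forall M, M \in Ms -> riccati_sol gamma M (P M).

(* A causal policy: u(t) = mu t [:: y(0); ...; y(t)]. *)
Definition policy := nat -> seq R -> R.

Definition closed_loop (M : model) (x0 : R) (w v : nat -> R) (mu : policy)
    (x u y : nat -> R) : Prop :=
  [/\ x 0%N = x0,
      (forall t, x t.+1 = ma M * x t + mb M * u t + w t),
      (forall t, y t = mc M * x t + v t) &
      (forall t, u t = mu t (mkseq y t.+1))].

Definition finite_gain (gamma : R) (Ms : seq model) (P : model -> R)
    (mu : policy) : Prop :=
  forall (M : model), M \in Ms ->
  forall (x0 : R) (w v x u y : nat -> R), closed_loop M x0 w v mu x u y ->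
  forall T : nat,
    \sum_(0 <= tau < T.+2) x tau ^+ 2
    - gamma ^+ 2 * \sum_(0 <= tau < T.+1) w tau ^+ 2
    - gamma ^+ 2 * \sum_(0 <= tau < T.+2) v tau ^+ 2
    - P M * x0 ^+ 2 <= 0.

Definition ahat (gamma : R) (M : model) (p : R) : R :=
  ma M * p / rden gamma M p.
Definition ghat (gamma : R) (M : model) (p : R) : R :=
  gamma ^+ 2 * (ma M * mc M / rden gamma M p).

Definition lstep (gamma : R) (M : model) (p xh l yt : R) : R :=
  l - p * xh ^+ 2 - gamma ^+ 2 * yt ^+ 2
  + (p * xh + gamma ^+ 2 * mc M * yt) ^+ 2 / rden gamma M p.

(* An observer-based policy eta receives the family
   {(xhat_M(t), l_M(t+1), y(t)) : M in Ms}, listed in the order of Ms. *)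
Definition obs_policy := seq (R * R * R) -> R.

Fixpoint obs (gamma : R) (Ms : seq model) (P : model -> R) (eta : obs_policy)
    (y : nat -> R) (t : nat) : (model -> R) * (model -> R) :=
  match t with
  | 0%N => (fun _ => 0, fun _ => 0)
  | s.+1 =>
      let st := obs gamma Ms P eta y s in
      let xh := st.1 in
      let l := st.2 in
      let l' := fun M => lstep gamma M (P M) (xh M) (l M) (y s) in
      let u := eta [seq (xh M, l' M, y s) | M <- Ms] in
      (fun M => ahat gamma M (P M) * xh M + mb M * u
                + ghat gamma M (P M) * y s, l')
  end.

Definition xhat gamma Ms P eta y t (M : model) : R :=
  (obs gamma Ms P eta y t).1 M.
Definition lobs gamma Ms P eta y t (M : model) : R :=
  (obs gamma Ms P eta y t).2 M.

Definition uobs gamma Ms P (eta : obs_policy) (y : nat -> R) (t : nat) : R :=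
  eta [seq (xhat gamma Ms P eta y t M, lobs gamma Ms P eta y t.+1 M, y t)
      | M <- Ms].

Definition observer_safe (gamma : R) (Ms : seq model) (P : model -> R)
    (eta : obs_policy) : Prop :=
  forall (y : nat -> R) (t : nat) (M : model), M \in Ms ->
    lobs gamma Ms P eta y t.+1 M <= 0.

Definition mu_of_eta gamma Ms P (eta : obs_policy) : policy :=
  fun t ys => uobs gamma Ms P eta (fun s => nth 0 ys s) t.

End Defs.

(* For each model, l_M(t+1) is the worst-case finite-gain cost up to time t
   over the initial states and disturbances compatible with the measurements:
   completing the square with the Riccati equation shows that the cost is at
   most l_M(t+1) - D_M (x(t) - x̄_M(t))^2, where D_M = P_M + γ^2 c^2 - 1 and
   x̄_M(t) is the filtered estimate, and the one-step loss is a nonnegative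
   quadratic form vanishing along a worst-case disturbance, so the bound is
   attained.  Hence a causal policy is finite gain iff it keeps every l_M(t+1)
   nonpositive.  The observers evolve by a fixed update driven by u and y, so
   this is a safety game on the observer state, in which a causal winning
   strategy can be replaced by a positional one: choose at each state a move
   keeping the state winning. *)

From mathcomp Require Import all_boot all_order all_algebra.
From mathcomp Require Import reals.
From mathcomp Require Import ring lra.
From Stdlib Require Import ClassicalEpsilon.
Import Order.TTheory GRing.Theory Num.Theory.
Local Open Scope ring_scope.
Set Implicit Arguments.
Unset Strict Implicit.
Unset Printing Implicit Defensive.

Section Trajectory.
Variable R : realType.

Fixpoint xtraj (M : model R) (u w : nat -> R) (x0 : R) (t : nat) : R :=
  if t is s.+1 then ma M * xtraj M u w x0 s + mb M * u s + w s else x0.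

Lemma eq_xtraj M u1 u2 w1 w2 x0 t :
  (forall s, (s < t)%N -> u1 s = u2 s) -> (forall s, (s < t)%N -> w1 s = w2 s) ->
  xtraj M u1 w1 x0 t = xtraj M u2 w2 x0 t.
Proof.
elim: t => [//|t IH] eq_u eq_w /=.
by rewrite IH ?eq_u ?eq_w // => s /ltnW; [apply: eq_u | apply: eq_w].
Qed.

Definition gain_cost (g p : R) (x w v : nat -> R) (t : nat) : R :=
  \sum_(0 <= i < t.+1) x i ^+ 2 - g ^+ 2 * \sum_(0 <= i < t) w i ^+ 2
  - g ^+ 2 * \sum_(0 <= i < t.+1) v i ^+ 2 - p * x 0%N ^+ 2.

Lemma gain_cost0 g p x w v :
  gain_cost g p x w v 0 = x 0%N ^+ 2 - g ^+ 2 * v 0%N ^+ 2 - p * x 0%N ^+ 2.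
Proof. by rewrite /gain_cost !big_nat1 big_geq // mulr0 subr0. Qed.

Lemma gain_costS g p x w v t :
  gain_cost g p x w v t.+1 =
  gain_cost g p x w v t + (x t.+1 ^+ 2 - g ^+ 2 * w t ^+ 2 - g ^+ 2 * v t.+1 ^+ 2).
Proof. by rewrite /gain_cost !big_nat_recr //=; ring. Qed.

Lemma eq_gain_cost g p x1 x2 w1 w2 v1 v2 t :
  (forall s, (s <= t)%N -> x1 s = x2 s /\ v1 s = v2 s) ->
  (forall s, (s < t)%N -> w1 s = w2 s) ->
  gain_cost g p x1 w1 v1 t = gain_cost g p x2 w2 v2 t.
Proof.
move=> eq_xv eq_w; have [x0E _] := eq_xv 0%N isT.
rewrite /gain_cost x0E; congr (_ - _ * _ - _ * _ - _).
- by apply: eq_big_nat => s /andP[_ /eq_xv[-> _]].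
- by apply: eq_big_nat => s /andP[_ /eq_w ->].
- by apply: eq_big_nat => s /andP[_ /eq_xv[_ ->]].
Qed.

End Trajectory.

Section Riccati.
Variables (R : realType) (g : R) (M : model R) (p : R).
Hypotheses (g_neq0 : g != 0) (ric : riccati_sol g M p).
Local Notation a := (ma M).
Local Notation c := (mc M).
Local Notation D := (rden g M p).

Lemma riccati_sol_gt0 : 0 < p. Proof. by case: ric. Qed.

Lemma rden_gt0 : 0 < D. Proof. by case: ric => _ []. Qed.

Lemma rden_neq0 : D != 0. Proof. exact: lt0r_neq0 rden_gt0. Qed.

Lemma riccati_solK : p * (a ^+ 2 / D + g ^- 2) = 1.
Proof.
case: ric => p_gt0 [_ pE]; rewrite {1}pE mulVf //.
by rewrite -invr_eq0 -pE lt0r_neq0.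
Qed.

Lemma lstep_complete_square l xh x y :
  l - p * (x - xh) ^+ 2 + x ^+ 2 - g ^+ 2 * (y - c * x) ^+ 2 =
  lstep g M p xh l y - D * (x - (p * xh + g ^+ 2 * c * y) / D) ^+ 2.
Proof.
have := rden_neq0; rewrite /lstep /rden => D_neq0.
by field; rewrite exprMn.
Qed.

Definition riccati_gap z w := D * z ^+ 2 + g ^+ 2 * w ^+ 2 - p * (a * z + w) ^+ 2.

Lemma riccati_gapE z w :
  riccati_gap z w = p * ((a * g ^+ 2 * w - D * z) ^+ 2 / (D * g ^+ 2)).
Proof.
rewrite /riccati_gap -[X in X - _]mul1r -riccati_solK.
by field; rewrite rden_neq0 g_neq0.
Qed.

Lemma riccati_gap_ge0 z w : 0 <= riccati_gap z w.
Proof.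
have [p_ge0 D_ge0] := (ltW riccati_sol_gt0, ltW rden_gt0).
by rewrite riccati_gapE mulr_ge0 // divr_ge0 ?sqr_ge0 // mulr_ge0 ?sqr_ge0.
Qed.

Lemma riccati_gap_attained d : exists z w, a * z + w = d /\ riccati_gap z w = 0.
Proof.
have D_neq0 := rden_neq0.
exists (a * d * p / D), (d * p / g ^+ 2); split.
  by rewrite -[RHS]mulr1 -riccati_solK; field; rewrite D_neq0 g_neq0.
rewrite riccati_gapE.
have -> : a * g ^+ 2 * (d * p / g ^+ 2) - D * (a * d * p / D) = 0.
  by field; rewrite D_neq0 g_neq0.
by rewrite expr0n mul0r mulr0.
Qed.

Lemma ahat_ghat_filter xh y :
  ahat g M p * xh + ghat g M p * y = a * ((p * xh + g ^+ 2 * c * y) / D).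
Proof.
by rewrite /ahat /ghat; field; rewrite rden_neq0.
Qed.


Section OpenLoop.
Variables u y : nat -> R.

(* [xpred] and [lval] are the observers x̂_M and l_M of the model driven by
   arbitrary inputs [u] and measurements [y]; [xfilt t] maximises the square
   completed in [lstep], i.e. it is the estimate of x(t) once y(t) is known. *)
Fixpoint xpred t :=
  if t is s.+1 then ahat g M p * xpred s + mb M * u s + ghat g M p * y s else 0.

Fixpoint lval t :=
  if t is s.+1 then lstep g M p (xpred s) (lval s) (y s) else 0.

Lemma lvalS t : lval t.+1 = lstep g M p (xpred t) (lval t) (y t).
Proof. by []. Qed.

Definition xfilt t := (p * xpred t + g ^+ 2 * c * y t) / D.

Definition storage x t := lval t.+1 - D * (x - xfilt t) ^+ 2.

Lemma xpredS t : xpred t.+1 = a * xfilt t + mb M * u t.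
Proof. by rewrite /= /xfilt -ahat_ghat_filter; ring. Qed.

Lemma storage0 x : storage x 0 = x ^+ 2 - g ^+ 2 * (y 0%N - c * x) ^+ 2 - p * x ^+ 2.
Proof.
by rewrite /storage /xfilt lvalS -lstep_complete_square /=; ring.
Qed.

Lemma storageS t x w x' :
  x' = a * x + mb M * u t + w ->
  storage x' t.+1 = storage x t
    + (x' ^+ 2 - g ^+ 2 * w ^+ 2 - g ^+ 2 * (y t.+1 - c * x') ^+ 2)
    + riccati_gap (x - xfilt t) w.
Proof.
move=> x'E; rewrite /storage [xfilt t.+1]/xfilt lvalS -lstep_complete_square.
by rewrite xpredS x'E /riccati_gap; ring.
Qed.

Lemma gain_cost_le_storage x w v :
  (forall t, x t.+1 = a * x t + mb M * u t + w t) ->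
  (forall t, y t = c * x t + v t) ->
  forall t, gain_cost g p x w v t <= storage (x t) t.
Proof.
move=> xS yE; have vE t : v t = y t - c * x t by rewrite yE addrC addKr.
elim=> [|t IH]; first by rewrite gain_cost0 storage0 vE.
rewrite gain_costS (storageS (xS t)) vE.
by have := riccati_gap_ge0 (x t - xfilt t) (w t); lra.
Qed.

Lemma storage_attained t e : exists x0 w,
  let x := xtraj M u w x0 in
  [/\ forall s, (t <= s)%N -> w s = 0, x t - xfilt t = e &
      gain_cost g p x w (fun s => y s - c * x s) t = storage (x t) t].
Proof.
elim: t e => [|t IH] e.
  exists (xfilt 0 + e), (fun=> 0); split => //=; first by rewrite addrC addKr.
  by rewrite gain_cost0 storage0.
have [z [wt [zE gap0]]] := riccati_gap_attained (e + xfilt t.+1 - xpred t.+1).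
have [x0 [w [w0 xtE costE]]] := IH z.
pose w' s := if s == t then wt else w s.
have w'E : w' t = wt by rewrite /w' eqxx.
have x'E s : (s <= t)%N -> xtraj M u w' x0 s = xtraj M u w x0 s.
  by move=> le_st; apply: eq_xtraj => // r lt_rs; rewrite /w' ltn_eqF // (leq_trans lt_rs).
have x'S : xtraj M u w' x0 t.+1 = a * xtraj M u w x0 t + mb M * u t + wt.
  by rewrite /= x'E // w'E.
exists x0, w'; split.
- by move=> s lt_ts; rewrite /w' gtn_eqF // w0 // ltnW.
- have xtE' : xtraj M u w x0 t = z + xfilt t by rewrite -xtE subrK.
  by rewrite x'S xtE' mulrDr; move: zE (xpredS t); lra.
rewrite gain_costS (storageS x'S) xtE gap0 w'E -costE.
rewrite addr0; congr (_ + _).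
by apply: eq_gain_cost => s le_st; rewrite ?x'E // /w' ltn_eqF.
Qed.

Lemma storage_le_lval x t : storage x t <= lval t.+1.
Proof. by rewrite /storage gerBl mulr_ge0 ?sqr_ge0 // ltW // rden_gt0. Qed.

End OpenLoop.

End Riccati.

Section ClosedLoop.
Variables (R : realType) (g : R) (Ms : seq (model R)) (P : model R -> R).

Lemma finite_gainE mu :
  finite_gain g Ms P mu <->
  forall M, M \in Ms -> forall x0 w v x u y, closed_loop M x0 w v mu x u y ->
  forall T, gain_cost g (P M) x w v T.+1 <= 0.
Proof.
by split=> gain M HM x0 w v x u y cl T; have := gain M HM x0 w v x u y cl T;
  case: cl => <-.
Qed.

Section ObserverPolicy.
Variable eta : obs_policy R.

Lemma obs_causal y1 y2 t :
  (forall s, (s < t)%N -> y1 s = y2 s) -> obs g Ms P eta y1 t = obs g Ms P eta y2 t.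
Proof.
elim: t => [//|t IH] eq_y /=.
by rewrite IH ?eq_y // => s /ltnW; apply: eq_y.
Qed.

Lemma uobs_causal y1 y2 t :
  (forall s, (s <= t)%N -> y1 s = y2 s) -> uobs g Ms P eta y1 t = uobs g Ms P eta y2 t.
Proof.
move=> eq_y; rewrite /uobs /xhat /lobs eq_y // (@obs_causal y1 y2 t.+1) //.
by rewrite (@obs_causal y1 y2 t) // => s /ltnW; apply: eq_y.
Qed.

Lemma obs_open_loop y t M :
  let u := uobs g Ms P eta y in
  xhat g Ms P eta y t M = xpred g M (P M) u y t /\
  lobs g Ms P eta y t M = lval g M (P M) u y t.
Proof. by elim: t => [//|t [IHx IHl]]; rewrite /xhat /lobs /= -IHx -IHl. Qed.

Lemma observer_safe_finite_gain :
  g != 0 -> riccati_sols g Ms P -> observer_safe g Ms P eta ->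
  finite_gain g Ms P (mu_of_eta g Ms P eta).
Proof.
move=> g_neq0 ric safe; apply/finite_gainE => M HM x0 w v x u y [_ xS yE uE] T.
have uobsE t : u t = uobs g Ms P eta y t.
  by rewrite uE; apply: uobs_causal => s le_st; rewrite nth_mkseq.
have xS' t : x t.+1 = ma M * x t + mb M * uobs g Ms P eta y t + w t.
  by rewrite -uobsE.
apply: le_trans (gain_cost_le_storage g_neq0 (ric M HM) xS' yE T.+1) _.
apply: le_trans (storage_le_lval (ric M HM) _ _ _ _) _.
by have [_ <-] := obs_open_loop y T.+2 M; apply: safe.
Qed.

End ObserverPolicy.

Definition mu_input (mu : policy R) (y : nat -> R) t := mu t (mkseq y t.+1).

Lemma mu_input_causal mu y1 y2 t :
  (forall s, (s <= t)%N -> y1 s = y2 s) -> mu_input mu y1 t = mu_input mu y2 t.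
Proof.
move=> eq_y; rewrite /mu_input /mkseq; congr (mu t _); apply/eq_in_map => s.
by rewrite mem_iota add0n => /andP[_ /eq_y].
Qed.

Lemma finite_gain_lval_le0 mu M :
  g != 0 -> finite_gain g Ms P mu -> M \in Ms -> riccati_sol g M (P M) ->
  forall y t, lval g M (P M) (mu_input mu y) y t.+1 <= 0.
Proof.
(* Extend the worst case of [storage_attained] by a step with v(t+1) = 0; this
   changes y only at time t+1, which the input up to time t cannot see. *)
move=> g_neq0 /finite_gainE gain HM ric y t.
have [x0 [w [w0 xtE costE]]] := storage_attained g_neq0 ric (mu_input mu y) y t 0.
set x := xtraj M _ w x0 in xtE costE.
pose y' s := if s == t.+1 then mc M * x t.+1 else y s.
have y'E s : (s <= t)%N -> y' s = y s by move=> le_st; rewrite /y' ltn_eqF.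
pose x' := xtraj M (mu_input mu y') w x0.
have x'E s : (s <= t.+1)%N -> x' s = x s.
  move=> le_st; apply: eq_xtraj => // r lt_rs; apply: mu_input_causal => q le_qr.
  by rewrite y'E // (leq_trans le_qr) // -ltnS (leq_trans lt_rs).
pose v' s := y' s - mc M * x' s.
have cl : closed_loop M x0 w v' mu x' (mu_input mu y') y'.
  by split=> // s; rewrite /v' addrC subrK.
have := gain M HM _ _ _ _ _ _ cl t; rewrite gain_costS.
have -> : gain_cost g (P M) x' w v' t =
          gain_cost g (P M) x w (fun s => y s - mc M * x s) t.
  by apply: eq_gain_cost => // s le_st; rewrite /v' y'E // !x'E // ltnW.
rewrite costE /storage xtE w0 // /v' /y' eqxx x'E // subrr.
by have := sqr_ge0 (x t.+1); lra.
Qed.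

End ClosedLoop.

Section SafetyGame.
Variables (Q U Y : Type) (F : Q -> U -> Y -> Q) (safe : Q -> Prop).
Hypotheses (U_inhabited : inhabited U) (Y_inhabited : inhabited Y).

Fixpoint play (q : Q) (sg : (nat -> Y) -> nat -> U) (y : nat -> Y) t : Q :=
  if t is s.+1 then F (play q sg y s) (sg y s) (y s) else q.

Definition strictly_causal (sg : (nat -> Y) -> nat -> U) :=
  forall y1 y2 t, (forall s, (s < t)%N -> y1 s = y2 s) -> sg y1 t = sg y2 t.

Definition winning q :=
  exists sg, strictly_causal sg /\ forall y t, safe (play q sg y t).

Definition ycons (y0 : Y) (y : nat -> Y) s := if s is s'.+1 then y s' else y0.

Lemma winning_safe q : winning q -> safe q.
Proof. by case: Y_inhabited => y0 [sg [_ sg_safe]]; apply: (sg_safe (fun=> y0) 0%N). Qed.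

Lemma winning_step q : winning q -> exists u, forall y0, winning (F q u y0).
Proof.
case: Y_inhabited => yd [sg [sg_causal sg_safe]].
exists (sg (fun=> yd) 0%N) => y0.
exists (fun y t => sg (ycons y0 y) t.+1); split.
  by move=> y1 y2 t eq_y; apply: sg_causal => -[|s] //= /eq_y.
suff playE y t : play (F q (sg (fun=> yd) 0%N) y0) (fun y t => sg (ycons y0 y) t.+1) y t
                 = play q sg (ycons y0 y) t.+1.
  by move=> y t; rewrite playE.
elim: t => [|t /= ->] //=.
by rewrite (sg_causal (ycons y0 y) (fun=> yd) 0%N).
Qed.

Definition positional_move q : U :=
  epsilon U_inhabited (fun u => forall y0, winning (F q u y0)).

Lemma positional_play_safe (r : nat -> Q) (y : nat -> Y) :
  winning (r 0%N) -> (forall t, r t.+1 = F (r t) (positional_move (r t)) (y t)) ->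
  forall t, safe (r t).
Proof.
move=> win0 rS t; apply: winning_safe; elim: t => [//|t IH].
by rewrite rS; apply: (epsilon_spec U_inhabited _ (winning_step IH)).
Qed.

End SafetyGame.

Section ObserverGame.
Variables (R : realType) (g : R) (Ms : seq (model R)) (P : model R -> R).

(* The game state is what an observer-based policy sees: the triples
   (x̂_M(t), l_M(t+1), y(t)) listed along [Ms]. *)
Definition observer_update (M : model R) (st : R * R * R) (u y' : R) :=
  let xh' := ahat g M (P M) * st.1.1 + mb M * u + ghat g M (P M) * st.2 in
  (xh', lstep g M (P M) xh' st.1.2 y', y').

Definition observer_move (q : seq (R * R * R)) (u y' : R) :=
  [seq observer_update st.1 st.2 u y' | st <- zip Ms q].

Definition costs_nonpos (q : seq (R * R * R)) := forall st, st \in q -> st.1.2 <= 0.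

Lemma observer_move_map (f : model R -> R * R * R) u y' :
  observer_move [seq f M | M <- Ms] u y' = [seq observer_update M (f M) u y' | M <- Ms].
Proof. by rewrite /observer_move -{1}(map_id Ms) zip_map -map_comp. Qed.

Lemma finite_gain_winning mu y0 :
  g != 0 -> riccati_sols g Ms P -> finite_gain g Ms P mu ->
  winning observer_move costs_nonpos
    [seq (0, lstep g M (P M) 0 0 y0, y0) | M <- Ms].
Proof.
move=> g_neq0 ric gain.
exists (fun y => mu_input mu (ycons y0 y)); split.
  by move=> y1 y2 t eq_y; apply: mu_input_causal => -[|s] //= /eq_y.
move=> y t; pose y' := ycons y0 y; pose u := mu_input mu y'.
have -> : play observer_move [seq (0, lstep g M (P M) 0 0 y0, y0) | M <- Ms]
            (fun y => mu_input mu (ycons y0 y)) y t =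
          [seq (xpred g M (P M) u y' t, lval g M (P M) u y' t.+1, y' t) | M <- Ms].
  by elim: t => [//|t /= ->]; rewrite observer_move_map.
by move=> _ /mapP[M HM ->]; exact: (finite_gain_lval_le0 g_neq0 gain HM (ric M HM)).
Qed.

Lemma finite_gain_observer_safe mu :
  g != 0 -> riccati_sols g Ms P -> finite_gain g Ms P mu ->
  observer_safe g Ms P (positional_move observer_move costs_nonpos (inhabits 0)).
Proof.
move=> g_neq0 ric gain y t M HM.
set eta := positional_move _ _ _.
pose r t := [seq (xhat g Ms P eta y t M, lobs g Ms P eta y t.+1 M, y t) | M <- Ms].
have r_safe : forall t, costs_nonpos (r t).
  apply: (@positional_play_safe _ _ _ observer_move costs_nonpos (inhabits 0)
           (inhabits 0) r (fun t => y t.+1)).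
    exact: (finite_gain_winning (y 0%N) g_neq0 ric gain).
  by move=> s; rewrite /r observer_move_map.
exact: r_safe t _ (map_f _ HM).
Qed.

End ObserverGame.

Theorem theorem3 (R : realType) (gamma : R) (Ms : seq (model R))
    (P : model R -> R) :
  0 < gamma ->
  ((riccati_sols gamma Ms P /\ exists mu : policy R, finite_gain gamma Ms P mu)
   <->
   (riccati_sols gamma Ms P /\
    exists eta : obs_policy R, observer_safe gamma Ms P eta))
  /\
  (forall eta : obs_policy R,
     riccati_sols gamma Ms P -> observer_safe gamma Ms P eta ->
     finite_gain gamma Ms P (mu_of_eta gamma Ms P eta)).
Proof.
move=> /lt0r_neq0 gamma_neq0; split; last first.
  by move=> eta; apply: observer_safe_finite_gain.
split=> -[ric [pol H]]; split=> //.
  by eexists; exact: finite_gain_observer_safe H.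
by exists (mu_of_eta gamma Ms P pol); apply: observer_safe_finite_gain.
Qed.
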